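(* Let $B$ and $Q$ be algebras in the same signature $\tau$, suppose $B$ is abelian and has a Mal'cev term $m$ (a $\tau$-term with $B\models m(x,y,y)=x$ and $m(y,y,x)=x$), fix $0\in B$, and let $x+y:=m^B(x,0,y)$. Let $T_f:Q^{\operatorname{ar}f}\to B$ ($f\in\tau$) be arbitrary maps, and let $q:B\otimes^{T}Q\to Q$ be the projection $(b,x)\mapsto x$. Then $[1,\ker q]=0$ in $B\otimes^{T}Q$.
   Context: All algebras are in the sense of universal algebra. For congruences $\alpha,\beta$ of an algebra, $[\alpha,\beta]$ is the term-condition (TC) commutator; $0$ is the equality relation and $1$ the total relation. An algebra is abelian if $[1,1]=0$. Given algebras $B,Q$ in the same signature $\tau$, a binary operation $+$ on $B$, and maps $T_f:Q^{\operatorname{ar}f}\to B$ ($f\in\tau$), the algebra $B\otimes^{T}Q$ has universe $B\times Q$ and operations $F_f((b_1,q_1),\dots,(b_n,q_n))=\big(f^B(b_1,\dots,b_n)+T_f(q_1,\dots,q_n),\,f^Q(q_1,\dots,q_n)\big)$. *)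

From mathcomp Require Import all_boot.
Set Implicit Arguments. Unset Strict Implicit. Unset Printing Implicit Defensive.

Definition interp (Fs : Type) (ar : Fs -> nat) (A : Type) :=
  forall f : Fs, ('I_(ar f) -> A) -> A.

Inductive term (Fs : Type) (ar : Fs -> nat) (V : Type) : Type :=
| Var : V -> term ar V
| App : forall f : Fs, ('I_(ar f) -> term ar V) -> term ar V.

Fixpoint eval (Fs : Type) (ar : Fs -> nat) (A : Type) (op : interp ar A)
  (V : Type) (v : V -> A) (t : term ar V) : A :=
  match t with
  | Var x => v x
  | App f args => op f (fun i => eval op v (args i))
  end.

Definition rel (A : Type) := A -> A -> Prop.

Definition total_rel (A : Type) : rel A := fun _ _ => True.
Definition eq_rel (A : Type) : rel A := fun x y => x = y.

Definition congruence (Fs : Type) (ar : Fs -> nat) (A : Type) (op : interp ar A)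
  (R : rel A) : Prop :=
  [/\ (forall x, R x x), (forall x y, R x y -> R y x),
      (forall x y z, R x y -> R y z -> R x z) &
      (forall f (a b : 'I_(ar f) -> A), (forall i, R (a i) (b i)) -> R (op f a) (op f b))].

Definition tc_centralizes (Fs : Type) (ar : Fs -> nat) (A : Type) (op : interp ar A)
  (alpha beta delta : rel A) : Prop :=
  forall (m n : nat) (t : term ar ('I_m + 'I_n)%type) (a b : 'I_m -> A) (c d : 'I_n -> A),
    (forall i, alpha (a i) (b i)) -> (forall j, beta (c j) (d j)) ->
    delta (eval op (fun v => match v with inl i => a i | inr j => c j end) t)
          (eval op (fun v => match v with inl i => a i | inr j => d j end) t) ->
    delta (eval op (fun v => match v with inl i => b i | inr j => c j end) t)
          (eval op (fun v => match v with inl i => b i | inr j => d j end) t).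

Definition tc_commutator (Fs : Type) (ar : Fs -> nat) (A : Type) (op : interp ar A)
  (alpha beta : rel A) : rel A :=
  fun x y => forall delta : rel A, congruence op delta ->
    tc_centralizes op alpha beta delta -> delta x y.

Definition abelian_alg (Fs : Type) (ar : Fs -> nat) (A : Type) (op : interp ar A) : Prop :=
  forall x y, tc_commutator op (@total_rel A) (@total_rel A) x y -> x = y.

Definition val3 (A : Type) (x y z : A) : 'I_3 -> A :=
  fun i => match val i with 0 => x | 1 => y | _ => z end.

Definition malcev (Fs : Type) (ar : Fs -> nat) (B : Type) (op : interp ar B)
  (m : term ar 'I_3) : Prop :=
  forall x y, eval op (val3 x y y) m = x /\ eval op (val3 y y x) m = x.

Definition mplus (Fs : Type) (ar : Fs -> nat) (B : Type) (op : interp ar B)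
  (m : term ar 'I_3) (zero : B) (x y : B) : B :=
  eval op (val3 x zero y) m.

Definition otimes_op (Fs : Type) (ar : Fs -> nat) (B Q : Type)
  (opB : interp ar B) (opQ : interp ar Q) (plus : B -> B -> B)
  (T : forall f : Fs, ('I_(ar f) -> Q) -> B) : interp ar (B * Q)%type :=
  fun f args =>
    (plus (opB f (fun i => (args i).1)) (T f (fun i => (args i).2)),
     opQ f (fun i => (args i).2)).

Definition ker_rel (A C : Type) (h : A -> C) : rel A := fun x y => h x = h y.

From mathcomp Require Import all_boot.
From Stdlib Require Import FunctionalExtensionality.
Set Implicit Arguments. Unset Strict Implicit. Unset Printing Implicit Defensive.

(* Evaluate a term t of B (x)^T Q at a valuation p.  The second
   component is just t evaluated in Q at the second components of p.  The first
   component is a term of B: each operation f(s_1..s_k) of the product becomes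
   m(f(s_1'..s_k'), 0, T_f(q-values of the s_i)), so the first component is
   the value in B of a translated term [translate t] whose extra variables
   ("parameters") stand for the constant 0 and for the elements
   T_f(q(s_1),..,q(s_k)) attached to the subterms of t; these depend only on
   the Q-components of p (lemma [eval_otimes]).
   If two tuples c, d are ker q-related, their Q-components agree, hence so do
   all parameters, and the term condition C(1,1;0) of the abelian algebra B,
   applied to the translated term with the parameters grouped with the first
   block of variables, yields C(1, ker q; 0) in the product; as 0 is a
   congruence, [1, ker q] = 0.  Since the term condition only ranges
   over finitely many variables while the translated term has a parameter type
   of all terms, we first show that every term is a renaming of a term over
   some 'I_k ([finite_support]) and deduce the term condition of abelian
   algebras for arbitrary variable sets ([abelian_term_condition]). *)

Definition sel (V W A : Type) (a : V -> A) (c : W -> A) (x : V + W) : A :=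
  match x with inl i => a i | inr j => c j end.

Definition ord0_elim (Y : Type) (i : 'I_0) : Y := False_rect Y (notF (ltn_ord i)).

Section Terms.
Variables (Fs : Type) (ar : Fs -> nat).

Fixpoint rename (X Y : Type) (h : X -> Y) (t : term ar X) : term ar Y :=
  match t with
  | Var x => Var ar (h x)
  | App f args => App (fun i => rename h (args i))
  end.

Fixpoint subst (X Y : Type) (s : X -> term ar Y) (t : term ar X) : term ar Y :=
  match t with
  | Var x => s x
  | App f args => App (fun i => subst s (args i))
  end.

Lemma eval_rename (A : Type) (op : interp ar A) (X Y : Type) (h : X -> Y)
  (v : Y -> A) (t : term ar X) :
  eval op v (rename h t) = eval op (fun x => v (h x)) t.
Proof.
elim: t => [x|f args IH] //=; congr (op f _).
by apply: functional_extensionality => i; exact: IH.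
Qed.

Lemma eval_subst (A : Type) (op : interp ar A) (X Y : Type) (s : X -> term ar Y)
  (v : Y -> A) (t : term ar X) :
  eval op v (subst s t) = eval op (fun x => eval op v (s x)) t.
Proof.
elim: t => [x|f args IH] //=; congr (op f _).
by apply: functional_extensionality => i; exact: IH.
Qed.

Lemma rename_comp (X Y Z : Type) (h : X -> Y) (g : Y -> Z) (t : term ar X) :
  rename g (rename h t) = rename (fun x => g (h x)) t.
Proof.
elim: t => [x|f args IH] //=; congr App.
by apply: functional_extensionality => i; exact: IH.
Qed.

Definition finitely_supported (X : Type) (t : term ar X) : Prop :=
  exists k (g : 'I_k -> X) (t' : term ar 'I_k), t = rename g t'.

(* A finite family of finitely supported terms has a common finite support:
   the support of the first term followed by that of the others. *)
Lemma finite_support_family (X : Type) (N : nat) (F : 'I_N -> term ar X) :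
  (forall i, finitely_supported (F i)) ->
  exists k (g : 'I_k -> X) (ts : 'I_N -> term ar 'I_k),
    forall i, F i = rename g (ts i).
Proof.
elim: N F => [|N IH] F HF.
  by exists 0, (@ord0_elim X), (@ord0_elim _) => i; case: (ord0_elim False i).
have [k0 [g0 [t0 E0]]] := HF ord0.
have [k [g [ts E]]] := IH (fun i => F (lift ord0 i)) (fun i => HF _).
exists (k0 + k), (fun x => sel g0 g (split x)).
exists (fun i => match unlift ord0 i with
                 | None => rename (@lshift k0 k) t0
                 | Some j => rename (@rshift k0 k) (ts j) end) => i.
case: unliftP => [j ->|->]; rewrite rename_comp; [rewrite E | rewrite E0];
  congr rename; apply: functional_extensionality => x.
- by rewrite -[rshift _ _]/(unsplit (inr _)) unsplitK.
- by rewrite -[lshift _ _]/(unsplit (inl _)) unsplitK.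
Qed.

Lemma finite_support (X : Type) (t : term ar X) : finitely_supported t.
Proof.
elim: t => [x|f args IH]; first by exists 1, (fun _ => x), (Var ar ord0).
have [k [g [ts E]]] := finite_support_family IH.
exists k, g, (App ts) => /=; congr App.
by apply: functional_extensionality => i; exact: E.
Qed.

End Terms.

Lemma eq_rel_congruence (Fs : Type) (ar : Fs -> nat) (A : Type) (op : interp ar A) :
  congruence op (@eq_rel A).
Proof.
rewrite /eq_rel; split=> [//|x y ->//|x y z -> ->//|f a b Hab].
by congr (op f _); apply: functional_extensionality.
Qed.

(* Sorting the variables i : 'I_k of a finite support g : 'I_k -> V + W into
   the two blocks of a term over 'I_k + 'I_k: a valuation on V + W pulled back
   along g is read off two valuations of 'I_k through [side g]; each of them is
   only consulted on the indices of its own side ([sel_side]). *)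
Definition side (V W : Type) (k : nat) (g : 'I_k -> V + W) (i : 'I_k) : 'I_k + 'I_k :=
  if g i is inl _ then inl i else inr i.

Lemma sel_side (V W A : Type) (k : nat) (g : 'I_k -> V + W)
  (a x : V -> A) (c y : W -> A) (i : 'I_k) :
  sel (fun i => sel a y (g i)) (fun i => sel x c (g i)) (side g i) = sel a c (g i).
Proof. by rewrite /side; case E: (g i); rewrite /= E. Qed.

Lemma abelian_term_condition (Fs : Type) (ar : Fs -> nat) (B : Type) (op : interp ar B)
  (V W : Type) (t : term ar (V + W)) (a b : V -> B) (c d : W -> B) :
  abelian_alg op ->
  eval op (sel a c) t = eval op (sel a d) t ->
  eval op (sel b c) t = eval op (sel b d) t.
Proof.
move=> Hab; have [k [g [t' ->]]] := finite_support t.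
rewrite !eval_rename.
have E (a0 : V -> B) (c0 : W -> B) :
    (fun i => sel a0 c0 (g i)) =
    (fun i => sel (fun i => sel a0 c (g i)) (fun i => sel a c0 (g i)) (side g i)).
  by apply: functional_extensionality => i; rewrite sel_side.
rewrite (E a c) (E a d) (E b c) (E b d) -!(eval_rename op (side g)).
move=> Hac; apply: Hab => delta [Hrefl _ _ _] Hc.
move: (Hrefl (eval op (sel (fun i => sel a c (g i)) (fun i => sel a d (g i)))
                 (rename (side g) t'))).
by rewrite -{1}Hac; apply: (Hc k k).
Qed.

(* Regrouping the variables ((V + W) + P) as ((V + P) + W), so that parameters
   P can be treated together with the first block of variables. *)
Definition regroup (V W P : Type) (x : (V + W) + P) : (V + P) + W :=
  match x with
  | inl (inl v) => inl (inl v)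
  | inl (inr w) => inr w
  | inr p => inl (inr p)
  end.

Lemma sel_regroup (V W P A : Type) (a : V -> A) (c : W -> A) (r : P -> A) (x : (V + W) + P) :
  sel (sel a c) r x = sel (sel a r) c (regroup x).
Proof. by case: x => [[]|]. Qed.

Section Otimes.
Variables (Fs : Type) (ar : Fs -> nat) (B Q : Type) (opB : interp ar B) (opQ : interp ar Q).
Variables (m : term ar 'I_3) (zero : B) (T : forall f : Fs, ('I_(ar f) -> Q) -> B).

Let opBQ : interp ar (B * Q) := otimes_op opB opQ (mplus opB m zero) T.

(* Parameters of the translation of a term over V: the constant 0 (None) and
   one element T_f(...) for each application f(args) occurring in the term. *)
Definition param (V : Type) : Type := option {f : Fs & 'I_(ar f) -> term ar V}.

Definition param_val (V : Type) (q : V -> Q) (o : param V) : B :=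
  if o is Some (existT f args) then @T f (fun i => eval opQ q (args i)) else zero.

(* The B-term describing the first component of a term of B (x)^T Q:
   f(t_1..t_k) becomes m(f(t_1'..t_k'), 0, T_f(q(t_1)..q(t_k))). *)
Fixpoint translate (V : Type) (t : term ar V) : term ar (V + param V) :=
  match t with
  | Var x => Var ar (inl x)
  | App f args =>
      subst (val3 (App (fun i => translate (args i))) (Var ar (inr None))
                  (Var ar (inr (Some (existT _ f args))))) m
  end.

Lemma eval_otimes (V : Type) (p : V -> B * Q) (t : term ar V) :
  eval opBQ p t =
  (eval opB (sel (fun x => (p x).1) (param_val (fun x => (p x).2))) (translate t),
   eval opQ (fun x => (p x).2) t).
Proof.
elim: t => [x|f args IH] /=; first by case: (p x).
rewrite /opBQ /otimes_op /mplus eval_subst.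
have -> : (fun i => (eval opBQ p (args i)).1) =
          (fun i => eval opB (sel (fun x => (p x).1) (param_val (fun x => (p x).2)))
                             (translate (args i))).
  by apply: functional_extensionality => i; rewrite IH.
have -> : (fun i => (eval opBQ p (args i)).2) = (fun i => eval opQ (fun x => (p x).2) (args i)).
  by apply: functional_extensionality => i; rewrite IH.
congr pair; congr eval; apply: functional_extensionality => i.
by rewrite /val3; case: (val i) => [|[|k]].
Qed.

Lemma otimes_term_condition (V W : Type) (t : term ar (V + W))
  (a b : V -> B * Q) (c d : W -> B * Q) :
  abelian_alg opB -> (forall j, (c j).2 = (d j).2) ->
  eval opBQ (sel a c) t = eval opBQ (sel a d) t ->
  eval opBQ (sel b c) t = eval opBQ (sel b d) t.
Proof.
move=> Hab Hcd.
have Q_dc (a0 : V -> B * Q) : (fun x => (sel a0 d x).2) = (fun x => (sel a0 c x).2).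
  by apply: functional_extensionality => -[i|j] //=; rewrite Hcd.
have B_val (a0 : V -> B * Q) (c0 : W -> B * Q) (r : param (V + W) -> B) :
    sel (fun x => (sel a0 c0 x).1) r =
    (fun x => sel (sel (fun i => (a0 i).1) r) (fun j => (c0 j).1) (regroup x)).
  by apply: functional_extensionality => x; rewrite -sel_regroup; case: x => [[]|].
rewrite !eval_otimes !Q_dc !B_val -!(eval_rename opB (@regroup _ _ _)).
move=> /(congr1 fst) /= HB.
by congr pair; move: HB; apply: abelian_term_condition.
Qed.

Lemma otimes_centralizes :
  abelian_alg opB ->
  tc_centralizes opBQ (@total_rel (B * Q)) (ker_rel (fun p : B * Q => p.2)) (@eq_rel _).
Proof. by move=> Hab mm n t a b c d _ Hcd; apply: otimes_term_condition. Qed.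

End Otimes.

Theorem lemma2p7 (Fs : Type) (ar : Fs -> nat) (B Q : Type)
  (opB : interp ar B) (opQ : interp ar Q) (m : term ar 'I_3) (zero : B)
  (T : forall f : Fs, ('I_(ar f) -> Q) -> B) :
  abelian_alg opB -> malcev opB m ->
  forall u v : B * Q,
    tc_commutator (otimes_op opB opQ (mplus opB m zero) T)
      (@total_rel (B * Q)) (ker_rel (fun p : B * Q => p.2)) u v ->
    u = v.
Proof.
move=> Hab _ u v Huv; apply: (Huv (@eq_rel _)).
- exact: eq_rel_congruence.
- exact: otimes_centralizes.
Qed.
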